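(* Let $n\ge 2$ and let $g=(g_1,\dots,g_{n-1},0)$ be a smooth compactly supported vector field on $\mathbb{R}^{n-1}$. Then there exists a smooth divergence-free vector field $\phi=(\phi_1,\dots,\phi_n)$ on $\overline{\mathbb{R}^n_+}$, with compact support in $\overline{\mathbb{R}^n_+}$, such that $\phi|_{x_n=0}=0$ and $\frac{\partial\phi}{\partial x_n}\big|_{x_n=0}=g$.
   Context: $\mathbb{R}^n_+=\{x=(x',x_n)\in\mathbb{R}^n: x_n>0\}$, and $\mathbb{R}^{n-1}$ is identified with the boundary $\{x_n=0\}$. *)

From HB Require Import structures.
From mathcomp Require Import all_boot all_order all_algebra.
From mathcomp Require Import all_classical all_reals all_analysis.
Set Implicit Arguments. Unset Strict Implicit. Unset Printing Implicit Defensive.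
Import Order.TTheory GRing.Theory Num.Theory.
Import numFieldNormedType.Exports.
Local Open Scope classical_set_scope.
Local Open Scope ring_scope.

Section Defs.
Variable R : realType.

Definition ebasis {k : nat} (i : 'I_k) : 'rV[R]_k := \row_j ((j == i)%:R).

Definition elast {k : nat} : 'rV[R]_k := \row_j ((val j == k.-1)%:R).

(* last coordinate x_k of x in R^k (0 if k = 0) *)
Definition lastc {k : nat} (x : 'rV[R]_k) : R :=
  oapp (fun j => x 0 j) 0 (insub k.-1 : option 'I_k).

Definition partial {k : nat} (i : 'I_k) (f : 'rV[R]_k -> R) : 'rV[R]_k -> R :=
  fun x => derive f x (ebasis i).

Fixpoint Cm {k : nat} (m : nat) (f : 'rV[R]_k -> R) : Prop :=
  match m with
  | 0 => continuous f
  | m'.+1 => continuous f /\ (forall (i : 'I_k) x, derivable f x (ebasis i)) /\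
             (forall i : 'I_k, Cm m' (partial i f))
  end.

Definition smooth {k : nat} (f : 'rV[R]_k -> R) : Prop := forall m, Cm m f.

Definition divergence {k : nat} (phi : 'I_k -> 'rV[R]_k -> R) (x : 'rV[R]_k) : R :=
  \sum_(i < k) partial i (phi i) x.

(* boundary embedding R^{k-1} -> R^k, x' |-> (x', 0) *)
Definition bemb {k : nat} (x' : 'rV[R]_(k.-1)) : 'rV[R]_k :=
  \row_(i < k) oapp (fun j => x' 0 j) 0 (insub (val i) : option 'I_(k.-1)).

End Defs.
Arguments elast {R k}.
Arguments ebasis {R k}.

From HB Require Import structures.
From mathcomp Require Import all_boot all_order all_algebra.
From mathcomp Require Import all_classical all_reals all_analysis.
From mathcomp Require Import ring lra.
Import Order.TTheory GRing.Theory Num.Theory.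
Import numFieldNormedType.Exports.
Local Open Scope classical_set_scope.
Local Open Scope ring_scope.

(* Take a smooth H : R -> R supported in [-1, 1] with H(0) = H'(0) = 0 and
   H''(0) = 1, and put K = H' (hcutoff and kcutoff).  Writing x = (x', t), the field
   phi_i(x', t) = g_i(x') K(t) for i < n and phi_n(x', t) = - (div' g)(x') H(t)
   has divergence (div' g) K - (div' g) H' = 0, vanishes at t = 0, and its
   normal derivative at t = 0 is g K'(0) = g (recall g_n = 0).  One can take
   H(t) = (e/2) t^2 exp(-1/(1 - t^2)), which is smooth because every
   derivative of s |-> q(1/s) exp(-1/s) (extended by 0 for s <= 0, q a
   polynomial) has the same shape and tends to 0 at 0. *)

Section DerivableUpto.
Context {R : realType}.
Implicit Types f g : R -> R.

Fixpoint derivable_upto (k : nat) f : Prop :=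
  if k is k'.+1 then (forall x, derivable f x 1) /\ derivable_upto k' (derive1 f)
  else True.

Definition smooth1 f := forall k, derivable_upto k f.

Lemma derivable_uptoS k f : derivable_upto k.+1 f -> derivable_upto k f.
Proof. by elim: k f => [//|k IH] f [df /IH]. Qed.

Lemma derivable_uptoD k f g :
  derivable_upto k f -> derivable_upto k g -> derivable_upto k (f + g).
Proof.
elim: k f g => [//|k IH] f g [df Hf] [dg Hg]; split.
  by move=> x; apply: derivableD.
have -> : derive1 (f + g) = derive1 f + derive1 g.
  by apply/funext => x; rewrite /= !derive1E deriveD// -!derive1E.
exact: IH.
Qed.

Lemma derivable_uptoM k f g :
  derivable_upto k f -> derivable_upto k g -> derivable_upto k (f * g).
Proof.
elim: k f g => [//|k IH] f g [df Hf] [dg Hg]; split.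
  by move=> x; apply: derivableM.
have -> : derive1 (f * g) = f * derive1 g + g * derive1 f.
  by apply/funext => x; rewrite /= !derive1E deriveM// -!derive1E.
by apply: derivable_uptoD; apply: IH => //; apply: derivable_uptoS.
Qed.

Lemma derivable_upto_horner k (p : {poly R}) : derivable_upto k (horner p).
Proof.
elim: k p => [//|k IH] p; split; first by move=> x; exact: derivable_horner.
by rewrite -derivE.
Qed.

Lemma derivable_upto_comp k f g :
  derivable_upto k f -> derivable_upto k g -> derivable_upto k (g \o f).
Proof.
elim: k f g => [//|k IH] f g [df Hf] [dg Hg]; split.
  move=> x; apply/derivable1_diffP/differentiable_comp; exact/derivable1_diffP.
have -> : derive1 (g \o f) = (derive1 g \o f) * derive1 f.
  by apply/funext => x; rewrite /= derive1_comp.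
by apply: derivable_uptoM => //; apply: IH => //; apply: derivable_uptoS.
Qed.

Lemma smooth1_derivable {f} : smooth1 f -> forall x, derivable f x 1.
Proof. by move=> sf; have [] := sf 1%N. Qed.

Lemma smooth1_derive1 {f} : smooth1 f -> smooth1 (derive1 f).
Proof. by move=> sf k; have [] := sf k.+1. Qed.

End DerivableUpto.

Section Flat.
Context {R : realType}.
Implicit Types q : {poly R}.

Definition flat q (s : R) : R :=
  if 0 < s then q.[s^-1] * expR (- s^-1) else 0.

Definition flat_deriv_poly q : {poly R} := 'X^2 * (q - q^`()).

Lemma flat_le0 q s : s <= 0 -> flat q s = 0.
Proof. by rewrite /flat leNgt => /negbTE ->. Qed.

Lemma is_derive_flat_gt0 q (x : R) :
  0 < x -> is_derive x 1 (flat q) (flat (flat_deriv_poly q) x).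
Proof.
move=> x0; have hx : x != 0 by rewrite gt_eqF.
pose G s := q.[s^-1] * expR (- s^-1).
apply: (@near_eq_is_derive _ _ _ G).
  by near=> s; rewrite /G /flat ifT //; near: s; exact: lt_nbhsr.
have hV : is_derive x 1 (fun s : R => s^-1) (- x ^- 2 *: 1).
  exact: (@is_deriveV R id x 1 1).
have hq : is_derive x 1 (horner q \o (fun s : R => s^-1))
    (q^`().[x^-1] * (- x ^- 2 *: 1)) by exact: is_derive1_comp.
have hNV : is_derive x 1 (fun s : R => - s^-1) (- (- x ^- 2 *: 1)).
  exact: is_deriveN.
have he : is_derive x 1 (expR \o (fun s : R => - s^-1))
    (expR (- x^-1) * (- (- x ^- 2 *: 1))) by exact: is_derive1_comp.
apply: is_derive_eq (is_deriveM hq he) _.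
rewrite /flat ifT // /flat_deriv_poly !hornerE -exprVn /GRing.scale /=.
ring.
Unshelve. all: by end_near. Qed.

Lemma is_derive_flat_lt0 q (x : R) :
  x < 0 -> is_derive x 1 (flat q) (flat (flat_deriv_poly q) x).
Proof.
move=> x0; apply: (@near_eq_is_derive _ _ _ (cst 0)).
  by near=> s; rewrite flat_le0 // ltW //; near: s; exact: lt_nbhsl.
by apply: is_derive_eq; rewrite flat_le0 // ltW.
Unshelve. all: by end_near. Qed.

(* At u = 1/h the bound e^(-u) <= (d+2)! / u^(d+2) beats the growth of q. *)
Lemma flat_quotient_le q : exists C : R, 0 <= C /\
  forall h : R, 0 < h -> h <= 1 -> `|h^-1 * flat q h| <= C * h.
Proof.
set d := size q; set A : R := \sum_(i < d) `|q`_i|.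
set N : R := ((d.+2)`!)%:R.
have A0 : 0 <= A by apply: sumr_ge0.
have N0 : 0 < N by rewrite ltr0n fact_gt0.
exists (A * N); split; first by rewrite mulr_ge0 // ltW.
move=> h h0 h1; rewrite /flat h0.
have hV1 : 1 <= h^-1 by rewrite invf_ge1.
have hV0 : 0 < h^-1 by lra.
have Hq : `|q.[h^-1]| <= A * h^-1 ^+ d.
  rewrite horner_coef; apply: le_trans (ler_norm_sum _ _ _) _.
  rewrite /A mulr_suml; apply: ler_sum => i _.
  rewrite normrM normrX (ger0_norm (ltW hV0)); apply: ler_wpM2l => //.
  exact: ler_weXn2l (ltnW _).
have He : expR (- h^-1) <= N / h^-1 ^+ d.+2.
  rewrite expRN -invf_div lef_pV2 ?posrE ?expR_gt0 ?divr_gt0 ?exprn_gt0 //.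
  apply: le_trans (expR_ge1Dxn _ (ltW hV0)); lra.
rewrite !normrM (ger0_norm (ltW hV0)) (ger0_norm (ltW (expR_gt0 _))).
apply: (le_trans (y := h^-1 * (A * h^-1 ^+ d) * (N / h^-1 ^+ d.+2))).
  rewrite mulrA; apply: ler_pM He.
  - by rewrite mulr_ge0 // ltW.
  - exact: ltW (expR_gt0 _).
  - by apply: ler_wpM2l => //; rewrite ltW.
suff -> : h^-1 * (A * h^-1 ^+ d) * (N / h^-1 ^+ d.+2) = A * N * h by [].
have hd : h^-1 ^+ d != 0 by rewrite expf_neq0 // gt_eqF.
rewrite !exprS; move: (h^-1 ^+ d) hd => w wd; field.
by rewrite gt_eqF ?wd.
Qed.

Lemma is_derive_flat0 q : is_derive (0 : R) 1 (flat q) 0.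
Proof.
have [C [C0 HC]] := flat_quotient_le q.
have Cn : (fun h : R => C * `|h|) @ (0 : R)^' --> (0 : R).
  apply: cvg_trans (cvg_app _ (@nbhs_dnbhs _ (0 : R))) _.
  rewrite -[X in _ --> X](mulr0 C); apply: cvgM; first exact: cvg_cst.
  have := @cvg_norm _ _ _ _ _ (fun h : R => h) (0 : R) (@cvg_id _ _).
  by rewrite normr0; apply; exact: _.
have L : (fun h : R => h^-1 *: ((flat q \o shift 0) (h *: 1) - flat q 0))
    @ (0 : R)^' --> (0 : R).
  apply: (@squeeze_cvgr _ _ _ _ (fun h => - (C * `|h|)) (fun h => C * `|h|));
    [|rewrite -[X in _ --> X]oppr0; exact: cvgN | exact: Cn].
  near=> h.
  have h1 : `|h| < 1 by near: h; exact: dnbhs0_lt.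
  rewrite /= /shift addr0 [h *: 1]mulr1 [flat q 0]flat_le0 // subr0 -ler_norml.
  case: (ltP 0 h) => hpos.
    rewrite (gtr0_norm hpos); apply: HC => //.
    by rewrite (gtr0_norm hpos) in h1; exact: ltW.
  by rewrite flat_le0 // scaler0 normr0 mulr_ge0.
apply: DeriveDef; first by apply/cvg_ex; exists 0.
exact: cvg_lim L.
Unshelve. all: by end_near. Qed.

Lemma is_derive_flat q (x : R) : is_derive x 1 (flat q) (flat (flat_deriv_poly q) x).
Proof.
case: (ltgtP x 0) => [x0|x0|->]; [exact: is_derive_flat_lt0 | exact: is_derive_flat_gt0|].
by rewrite flat_le0 //; exact: is_derive_flat0.
Qed.

Lemma smooth1_flat q : smooth1 (flat q).
Proof.
move=> k; elim: k q => [//|k IH] q; split; first by move=> x; case: (is_derive_flat q x).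
have -> : derive1 (flat q) = flat (flat_deriv_poly q).
  by apply/funext => x; rewrite derive1E; case: (is_derive_flat q x).
exact: IH.
Qed.

End Flat.

Section Cutoff.
Context {R : realType}.

Definition cutoff : R -> R := flat 1 \o horner (1 - 'X^2).

(* The factor e/2 makes hcutoff''(0) = (e/2) * 2 * cutoff 0 = 1. *)
Definition hcutoff_poly : {poly R} := (2^-1 * expR 1) *: 'X^2.

Definition hcutoff : R -> R := horner hcutoff_poly * cutoff.

Definition kcutoff : R -> R := derive1 hcutoff.

Lemma smooth1_cutoff : smooth1 cutoff.
Proof.
by move=> k; apply: derivable_upto_comp; [exact: derivable_upto_horner | exact: smooth1_flat].
Qed.

Lemma smooth1_hcutoff : smooth1 hcutoff.
Proof.
by move=> k; apply: derivable_uptoM; [exact: derivable_upto_horner | exact: smooth1_cutoff].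
Qed.

Lemma smooth1_kcutoff : smooth1 kcutoff.
Proof. exact: smooth1_derive1 smooth1_hcutoff. Qed.

Lemma cutoff0 : cutoff 0 = (expR 1)^-1.
Proof. by rewrite /cutoff /= /flat !hornerE expr0n /= subr0 ltr01 invr1 expRN. Qed.

Lemma hcutoff0 : hcutoff 0 = 0.
Proof.
by change (hcutoff_poly.[0] * cutoff 0 = 0); rewrite hornerZ hornerXn expr0n /= mulr0 mul0r.
Qed.

Lemma hcutoff_poly_deriv : hcutoff_poly^`() = (2^-1 * expR 1) *: ('X *+ 2).
Proof. by rewrite /hcutoff_poly derivZ derivXn. Qed.

Lemma kcutoffE :
  kcutoff = horner hcutoff_poly * derive1 cutoff + cutoff * horner hcutoff_poly^`().
Proof.
apply/funext => x; rewrite /kcutoff /hcutoff derive1E deriveM;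
  [|exact: derivable_horner|exact: smooth1_derivable smooth1_cutoff x].
by rewrite -!derive1E derivE.
Qed.

Lemma kcutoff0 : kcutoff 0 = 0.
Proof.
rewrite kcutoffE.
change (hcutoff_poly.[0] * derive1 cutoff 0 + cutoff 0 * hcutoff_poly^`().[0] = 0).
by rewrite hcutoff_poly_deriv /hcutoff_poly !hornerE /=; ring.
Qed.

Lemma derive1_kcutoff0 : derive1 kcutoff 0 = 1.
Proof.
have dG := smooth1_derivable smooth1_cutoff 0.
have dG' := smooth1_derivable (smooth1_derive1 smooth1_cutoff) 0.
have dP := @derivable_horner R hcutoff_poly 0.
have dP' := @derivable_horner R hcutoff_poly^`() 0.
rewrite kcutoffE derive1E deriveD; [|exact: derivableM dP dG'|exact: derivableM dG dP'].
rewrite (deriveM dP dG') (deriveM dG dP') -!derive1E -!derivE.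
rewrite !hcutoff_poly_deriv derivZ derivMn derivX cutoff0 /hcutoff_poly /= !hornerE /=.
rewrite !mulr0 scale0r scaler0 scale0r !add0r addr0 -[_ *: _]/(_ * _).
by field; rewrite gt_eqF // expR_gt0.
Qed.

Lemma hcutoff_out (t : R) : 1 <= `|t| -> hcutoff t = 0.
Proof.
move=> t1; change (hcutoff_poly.[t] * flat 1 (1 - 'X^2).[t] = 0).
rewrite flat_le0 ?mulr0 // !hornerE.
by move: t1; rewrite ler_normr => /orP[] h; nra.
Qed.

Lemma kcutoff_out (t : R) : 1 < `|t| -> kcutoff t = 0.
Proof.
move=> t1; rewrite /kcutoff derive1E (@near_eq_derive _ _ _ hcutoff (cst 0)) ?derive_cst //.
move: t1; rewrite ltr_normr => /orP[] h; near=> s; rewrite hcutoff_out //=;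
  apply: ltW; rewrite ltr_normr; apply/orP.
- by left; near: s; exact: lt_nbhsr.
- by right; rewrite ltrNr; near: s; apply: lt_nbhsl; rewrite ltrNr.
Unshelve. all: by end_near. Qed.

End Cutoff.

Section Smooth.
Context {R : realType} {k : nat}.
Implicit Types f g : 'rV[R]_k -> R.

Lemma smooth_of_partial_closed (P : ('rV[R]_k -> R) -> Prop) :
  (forall f, P f -> [/\ continuous f, forall i x, derivable f x (ebasis i)
                     & forall i, P (partial i f)]) ->
  forall f, P f -> smooth f.
Proof.
move=> HP f Pf m; elim: m f Pf => [|m IH] f /[dup] Pf /HP[cf df Pdf] //.
by split => //; split => // i; exact: IH.
Qed.

Lemma CmD m f g : Cm m f -> Cm m g -> Cm m (fun y => f y + g y).
Proof.
elim: m f g => [|m IH] f g.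
  by move=> cf cg x; apply: continuousD; [exact: cf | exact: cg].
move=> [cf [df pf]] [cg [dg pg]]; split.
  by move=> x; apply: continuousD; [exact: cf | exact: cg].
split; first by move=> i x; apply: derivableD.
move=> i; have -> : partial i (fun y => f y + g y) = fun y => partial i f y + partial i g y.
  by apply/funext => y; rewrite /partial deriveD.
exact: IH (pf i) (pg i).
Qed.

Lemma CmN m f : Cm m f -> Cm m (fun y => - f y).
Proof.
elim: m f => [|m IH] f; first by move=> cf x; apply: continuousN; exact: cf.
move=> [cf [df pf]]; split; first by move=> x; apply: continuousN; exact: cf.
split; first by move=> i x; apply: derivableN.
move=> i; have -> : partial i (fun y => - f y) = fun y => - partial i f y.
  by apply/funext => y; rewrite /partial deriveN.
exact: IH (pf i).
Qed.

Lemma Cm_cst m (c : R) : Cm m (fun _ : 'rV[R]_k => c).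
Proof.
elim: m c => [|m IH] c; first by move=> x; exact: cst_continuous.
split; first by move=> x; exact: cst_continuous.
split; first by move=> i x; exact: derivable_cst.
move=> i; have -> : partial i (fun _ : 'rV[R]_k => c) = fun _ => 0.
  by apply/funext => y; rewrite /partial derive_cst.
exact: IH.
Qed.

Lemma smoothN f : smooth f -> smooth (fun y => - f y).
Proof. by move=> sf m; apply: CmN. Qed.

Lemma smooth_sum n (F : 'I_n -> 'rV[R]_k -> R) :
  (forall j, smooth (F j)) -> smooth (fun y => \sum_(j < n) F j y).
Proof.
elim: n F => [|n IH] F sF m.
  have -> : (fun y => \sum_(j < 0) F j y) = fun _ => 0.
    by apply/funext => y; rewrite big_ord0.
  exact: Cm_cst.
have -> : (fun y => \sum_(j < n.+1) F j y) =
    fun y => \sum_(j < n) F (widen_ord (leqnSn n) j) y + F ord_max y.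
  by apply/funext => y; rewrite big_ord_recr.
by apply: CmD; [apply: IH => j | exact: sF].
Qed.

Lemma smooth_continuous {f} : smooth f -> continuous f.
Proof. by move=> sf; exact: (sf 0%N). Qed.

Lemma smooth_derivable {f} : smooth f -> forall i x, derivable f x (ebasis i).
Proof. by move=> sf; have [_ [h _]] := sf 1%N; exact: h. Qed.

Lemma smooth_partial {f} : smooth f -> forall i, smooth (partial i f).
Proof. by move=> sf i m; have [_ [_ h]] := sf m.+1; exact: h. Qed.

End Smooth.

Section Tensor.
Context {R : realType} {m : nat}.

Definition widen1 (j : 'I_m) : 'I_m.+1 := widen_ord (leqnSn m) j.

Definition rinit (x : 'rV[R]_m.+1) : 'rV[R]_m := \row_j x 0 (widen1 j).

Definition rlast (x : 'rV[R]_m.+1) : R := x 0 ord_max.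

Definition tensor (a : 'rV[R]_m -> R) (b : R -> R) (x : 'rV[R]_m.+1) : R :=
  a (rinit x) * b (rlast x).

Lemma widen1_eq_max (j : 'I_m) : (widen1 j == ord_max) = false.
Proof. by apply/negbTE; rewrite -val_eqE /= neq_ltn ltn_ord. Qed.

Lemma widen1_or_max (i : 'I_m.+1) : (exists j, i = widen1 j) \/ i = ord_max.
Proof.
case: (unliftP ord_max i) => [j ->|->]; last by right.
by left; exists j; apply/val_inj; rewrite /= /bump leqNgt ltn_ord.
Qed.

Lemma rinit_bemb (x' : 'rV[R]_m) : rinit (bemb (k := m.+1) x') = x'.
Proof.
apply/rowP => j; rewrite !mxE /=.
case: insubP => [i _ hi|]; last by rewrite /= ltn_ord.
by congr (x' 0 _); apply/val_inj.
Qed.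

Lemma rlast_bemb (x' : 'rV[R]_m) : rlast (bemb (k := m.+1) x') = 0.
Proof.
rewrite /rlast !mxE /=; case: insubP => [i _ hi|//].
by have := ltn_ord i; rewrite hi ltnn.
Qed.

Lemma elast_max : elast = ebasis (ord_max : 'I_m.+1) :> 'rV[R]_m.+1.
Proof. by apply/rowP => j; rewrite !mxE. Qed.

Lemma rinit_shift_widen (h : R) (j : 'I_m) x :
  rinit (h *: ebasis (widen1 j) + x) = h *: ebasis j + rinit x.
Proof. by apply/rowP => i; rewrite !mxE. Qed.

Lemma rlast_shift_widen (h : R) (j : 'I_m) x :
  rlast (h *: ebasis (widen1 j) + x) = rlast x.
Proof. by rewrite /rlast !mxE eq_sym widen1_eq_max mulr0 add0r. Qed.

Lemma rinit_shift_max (h : R) x : rinit (h *: ebasis ord_max + x) = rinit x.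
Proof. by apply/rowP => i; rewrite !mxE widen1_eq_max mulr0 add0r. Qed.

Lemma rlast_shift_max (h : R) x : rlast (h *: ebasis ord_max + x) = h + rlast x.
Proof. by rewrite /rlast !mxE eqxx mulr1. Qed.

Lemma continuous_rinit : continuous rinit.
Proof.
move=> x; apply: (proj2 (@cvg_mx_entourageP _ _ _ (rinit @ x)
  (fmap_filter _ (nbhs_filter x)) _)) => A entA.
have := proj1 (@cvg_mx_entourageP _ _ _ (nbhs x) (nbhs_filter x) x)
  (@cvg_id _ (nbhs x)) A entA.
by apply: filterS => y H i j; rewrite !mxE; apply: H.
Qed.

Lemma continuous_tensor (a : 'rV[R]_m -> R) (b : R -> R) :
  continuous a -> (forall t, derivable b t 1) -> continuous (tensor a b).
Proof.
move=> ca db x; apply: (@continuousM _ _ (a \o rinit) (b \o rlast)).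
  exact: continuous_comp (continuous_rinit x) (ca _).
apply: continuous_comp; first exact: coord_continuous.
exact/differentiable_continuous/derivable1_diffP.
Qed.

Lemma derive_tensor_widen (a : 'rV[R]_m -> R) (b : R -> R) x (j : 'I_m) :
  derivable a (rinit x) (ebasis j) ->
  derivable (tensor a b) x (ebasis (widen1 j)) /\
  derive (tensor a b) x (ebasis (widen1 j)) = b (rlast x) * derive a (rinit x) (ebasis j).
Proof.
move=> da.
have E : (fun h : R =>
      h^-1 *: ((tensor a b \o shift x) (h *: ebasis (widen1 j)) - tensor a b x)) =
    b (rlast x) \*: (fun h : R =>
      h^-1 *: ((a \o shift (rinit x)) (h *: ebasis j) - a (rinit x))).
  apply/funext => h; rewrite /tensor /= /shift rinit_shift_widen rlast_shift_widen.
  by rewrite /GRing.scale /=; ring.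
split; last by rewrite /derive E limZl_tmp.
rewrite /derivable E; apply/cvg_ex.
by exists (b (rlast x) *: derive a (rinit x) (ebasis j)); exact: cvgZl_tmp.
Qed.

Lemma derive_tensor_max (a : 'rV[R]_m -> R) (b : R -> R) x :
  derivable b (rlast x) 1 ->
  derivable (tensor a b) x (ebasis ord_max) /\
  derive (tensor a b) x (ebasis ord_max) = a (rinit x) * derive1 b (rlast x).
Proof.
move=> db.
have E : (fun h : R =>
      h^-1 *: ((tensor a b \o shift x) (h *: ebasis ord_max) - tensor a b x)) =
    a (rinit x) \*: (fun h : R =>
      h^-1 *: ((b \o shift (rlast x)) (h *: 1) - b (rlast x))).
  apply/funext => h; rewrite /tensor /= /shift rinit_shift_max rlast_shift_max.
  by rewrite /GRing.scale /= mulr1; ring.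
split; last by rewrite derive1E /derive E limZl_tmp.
rewrite /derivable E; apply/cvg_ex.
by exists (a (rinit x) *: derive b (rlast x) 1); exact: cvgZl_tmp.
Qed.

Lemma smooth_tensor (a : 'rV[R]_m -> R) (b : R -> R) :
  smooth a -> smooth1 b -> smooth (tensor a b).
Proof.
move=> sa sb; apply: (smooth_of_partial_closed
  (fun f => exists a b, [/\ smooth a, smooth1 b & f = tensor a b])); last by exists a, b.
move=> _ [{sa sb}a [{}b [sa sb ->]]]; have db := smooth1_derivable sb.
split; first exact: continuous_tensor (smooth_continuous sa) db.
- move=> i x; case: (widen1_or_max i) => [[j ->]|->].
  + exact: (derive_tensor_widen a b x j (smooth_derivable sa j _)).1.
  + exact: (derive_tensor_max a b x (db _)).1.
- move=> i; case: (widen1_or_max i) => [[j ->]|->].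
  + exists (partial j a), b; split => //; first exact: smooth_partial.
    apply/funext => y; rewrite /partial.
    by rewrite (derive_tensor_widen a b y j (smooth_derivable sa j _)).2 mulrC.
  + exists a, (derive1 b); split => //; first exact: smooth1_derive1.
    by apply/funext => y; rewrite /partial (derive_tensor_max a b y (db _)).2.
Qed.

End Tensor.

Section Support.
Context {R : realType} {m : nat}.

Lemma closure_support_derive (G : 'rV[R]_m -> R) (A : set 'rV[R]_m) y v :
  (forall z, G z != 0 -> A z) -> derive G y v != 0 -> closure A y.
Proof.
move=> GA Gy B By; apply/set0P/negP => /eqP AB0.
suff : derive G y v = 0 by move/eqP; rewrite (negbTE Gy).
rewrite (@near_eq_derive _ _ _ _ (cst 0)) ?derive_cst //.
apply: filterS By => z Bz; apply/eqP; apply: contraT => Gz.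
have : (A `&` B) z by split; [exact: GA | exact: Bz].
by rewrite AB0.
Qed.

Lemma compact_closure_cylinder (K : set 'rV[R]_m) (S : set 'rV[R]_m.+1) :
  compact K -> (forall x, S x -> K (rinit x) /\ `|rlast x| <= 1) ->
  compact (closure S).
Proof.
move=> cK SK.
pose A i := if unlift ord_max i is Some j then (fun y : 'rV[R]_m => y 0 j) @` K
            else `[-1, 1]%classic.
have cA : compact [set v : 'rV[R]_m.+1 | forall i, A i (v 0 i)].
  apply: rV_compact => i; rewrite /A; case: unlift => [j|]; last exact: segment_compact.
  apply: continuous_compact cK; apply: continuous_subspaceT; exact: coord_continuous.
have clA := compact_closed (@norm_hausdorff _ _) cA.
apply: subclosed_compact; [exact: closed_closure | exact: cA |].
rewrite [X in _ `<=` X](closure_id _).1 //.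
apply: closureS => x /SK[Kx lx] l; rewrite /A; case: (unliftP ord_max l) => [j ->|->].
  exists (rinit x) => //; rewrite mxE; congr (x 0 _); apply/val_inj.
  by rewrite /= /bump leqNgt ltn_ord.
by rewrite /= in_itv /= -ler_norml.
Qed.

End Support.

Section SolenoidalLift.
Context {R : realType} {m : nat}.
Variable g : 'I_m.+1 -> 'rV[R]_m -> R.

Definition bdivergence (y : 'rV[R]_m) : R := \sum_(j < m) partial j (g (widen1 j)) y.

Definition solenoidal_lift (i : 'I_m.+1) : 'rV[R]_m.+1 -> R :=
  if (i < m)%N then tensor (g i) kcutoff else tensor (fun y => - bdivergence y) hcutoff.

Lemma solenoidal_lift_widen j : solenoidal_lift (widen1 j) = tensor (g (widen1 j)) kcutoff.
Proof. by rewrite /solenoidal_lift /= ltn_ord. Qed.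

Lemma solenoidal_lift_max :
  solenoidal_lift ord_max = tensor (fun y => - bdivergence y) hcutoff.
Proof. by rewrite /solenoidal_lift ltnn. Qed.

Lemma solenoidal_lift_bemb i x' : solenoidal_lift i (bemb (k := m.+1) x') = 0.
Proof.
rewrite /solenoidal_lift; case: ifP => _;
  by rewrite /tensor rlast_bemb ?kcutoff0 ?hcutoff0 mulr0.
Qed.

Lemma derive_solenoidal_lift_bemb i x' :
  (forall y, g ord_max y = 0) ->
  derive (solenoidal_lift i) (bemb (k := m.+1) x') elast = g i x'.
Proof.
move=> g_max; rewrite elast_max.
have [[j ->]|->] := widen1_or_max i.
  rewrite solenoidal_lift_widen.
  rewrite (derive_tensor_max _ _ _ (smooth1_derivable smooth1_kcutoff _)).2.
  by rewrite rinit_bemb rlast_bemb derive1_kcutoff0 mulr1.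
rewrite solenoidal_lift_max.
rewrite (derive_tensor_max _ _ _ (smooth1_derivable smooth1_hcutoff _)).2.
by rewrite rlast_bemb -/kcutoff kcutoff0 mulr0 g_max.
Qed.

Lemma solenoidal_lift_support i x :
  solenoidal_lift i x != 0 ->
  closure [set y | exists i, g i y != 0] (rinit x) /\ `|rlast x| <= 1.
Proof.
have [[j ->]|->] := widen1_or_max i.
  rewrite solenoidal_lift_widen mulf_eq0 negb_or => /andP[gx kx]; split.
    by apply: subset_closure; exists (widen1 j).
  by rewrite leNgt; apply: contra kx => /kcutoff_out ->.
rewrite solenoidal_lift_max mulf_eq0 negb_or oppr_eq0 => /andP[dx hx]; split.
  have [j _ gj] : exists2 j : 'I_m, true & partial j (g (widen1 j)) (rinit x) != 0.
    apply/exists_inP; apply: contraNT dx => /exists_inPn gx0.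
    by apply/eqP/big1 => j _; apply/eqP; rewrite -[_ == 0]negbK gx0.
  by apply: closure_support_derive gj => z gz; exists (widen1 j).
by rewrite leNgt; apply: contra hx => /ltW /hcutoff_out ->.
Qed.

Hypothesis g_smooth : forall i, smooth (g i).

Lemma smooth_solenoidal_lift i : smooth (solenoidal_lift i).
Proof.
rewrite /solenoidal_lift; case: ifP => _; apply: smooth_tensor.
- exact: g_smooth.
- exact: smooth1_kcutoff.
- by apply: smoothN; apply: smooth_sum => j; exact: smooth_partial.
- exact: smooth1_hcutoff.
Qed.

Lemma divergence_solenoidal_lift x : divergence solenoidal_lift x = 0.
Proof.
rewrite /divergence big_ord_recr /= solenoidal_lift_max /partial.
rewrite (derive_tensor_max _ _ _ (smooth1_derivable smooth1_hcutoff _)).2 -/kcutoff.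
under eq_bigr => j _ do rewrite solenoidal_lift_widen
  (derive_tensor_widen _ _ _ _ (smooth_derivable (g_smooth _) j _)).2.
by rewrite -mulr_sumr mulNr mulrC subrr.
Qed.

End SolenoidalLift.

Theorem mainTheorem2 (R : realType) (n : nat) (hn : (2 <= n)%N)
  (g : 'I_n -> 'rV[R]_(n.-1) -> R)
  (g_smooth : forall i, smooth (g i))
  (g_supp : compact (closure [set x' | exists i, g i x' != 0]))
  (g_last : forall i : 'I_n, val i = n.-1 -> forall x', g i x' = 0) :
  exists phi : 'I_n -> 'rV[R]_n -> R,
    (forall i, smooth (phi i)) /\
    (forall x, 0 <= lastc x -> divergence phi x = 0) /\
    compact (closure [set x | 0 <= lastc x /\ exists i, phi i x != 0]) /\
    (forall i x', phi i (bemb x') = 0) /\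
    (forall i x', derive (phi i) (bemb x') elast = g i x').
Proof.
case: n hn g g_smooth g_supp g_last => [//|m] _ g g_smooth g_supp g_last /=.
exists (solenoidal_lift g); split; [|split; [|split; [|split]]].
- exact: smooth_solenoidal_lift.
- by move=> x _; apply: divergence_solenoidal_lift.
- apply: compact_closure_cylinder g_supp _ => x [_ [i]].
  exact: solenoidal_lift_support.
- exact: solenoidal_lift_bemb.
- by move=> i x'; apply: derive_solenoidal_lift_bemb => y; apply: g_last.
Qed.
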